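(* Let $F\in\mathbb{R}[x]$ be non-constant, $s\ge5$ an integer, $\alpha,\beta\in\mathbb{R}$ with $\alpha\ne0$, and $Q=F\circ T_s\circ(\alpha x+\beta)$, with $n=\deg Q$. 1) If $Ch_2(Q)=Ch_3(Q)=0$, then either $\alpha=\pm1$ and $\beta=0$, or $$4\beta^2=\frac{6}{(n-1)(2n-1)},\qquad \alpha^2=\frac{2n-4}{2n-1}.$$ 2) If $Ch_2(Q)=Ch_4(Q)=0$, then either $\alpha=\pm1$ and $\beta=0$, or $$4\beta^2=\frac{12}{(n-1)(2n-1)},\qquad \alpha^2=\frac{2n-7}{2n-1}.$$ In particular, in both cases, unless $\alpha=\pm1$ and $\beta=0$, one has $\alpha^2<1$ and $\beta\ne0$.
   Context: $T_k$ denotes the Chebyshev polynomial of the first kind of degree $k$, $T_k(\cos\phi)=\cos(k\phi)$. Every real polynomial $Q$ of degree $n$ can be uniquely written as $Q=\sum_{k=0}^n d_kT_k$ with $d_k\in\mathbb{R}$; set $Ch_i(Q)=d_{n-i}$ for $0\le i\le n$. $\circ$ denotes composition. *)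

From HB Require Import structures.
From mathcomp Require Import all_boot all_order all_algebra.
Set Implicit Arguments. Unset Strict Implicit. Unset Printing Implicit Defensive.
Import Order.TTheory GRing.Theory Num.Theory.
Local Open Scope ring_scope.

Section Cheb.
Variable R : nzRingType.

(* (T_k, T_{k+1}) *)
Fixpoint cheb_pair (k : nat) : {poly R} * {poly R} :=
  match k with
  | 0%N => (1, 'X)
  | k'.+1 => let: (a, b) := cheb_pair k' in (b, ('X *+ 2) * b - a)
  end.

Definition cheb (k : nat) : {poly R} := (cheb_pair k).1.

(* d is the (unique) sequence of Chebyshev coefficients of Q:
   Q = \sum_{k=0}^{deg Q} d_k T_k.  Then Ch_i(Q) = d (deg Q - i). *)
Definition cheb_expansion (Q : {poly R}) (d : nat -> R) : Prop :=
  Q = \sum_(k < (size Q).-1.+1) d k *: cheb k.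
End Cheb.

(* Write m = deg F and n = m s.  Splitting F = c T_m + G with deg G < m, the composition
   F o T_s = c T_n + G o T_s agrees with c T_n in all degrees >= n - 4, since
   deg (G o T_s) <= n - s.  Hence the five top coefficients of Q are, up to a nonzero
   factor, those of H(alpha x + beta), where H = x^n - (n/4) x^(n-2) + n(n-3)/32 x^(n-4)
   is the normalized top of T_n; they are explicit polynomials in alpha, beta and n.
   The Chebyshev coefficients Ch_2, Ch_3, Ch_4 of Q are explicit linear combinations of
   these top coefficients.  So Ch_2 = 0 reads 2 (n - 1) beta^2 = 1 - alpha^2, and with
   Ch_3 = 0 (resp. Ch_4 = 0) eliminating alpha^2 leaves either beta = 0, forcing
   alpha^2 = 1, or a linear equation for beta^2. *)

From mathcomp Require Import all_boot all_order all_algebra.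
From mathcomp Require Import ring lra zify.
Set Implicit Arguments. Unset Strict Implicit. Unset Printing Implicit Defensive.
Import Order.TTheory GRing.Theory Num.Theory.
Local Open Scope ring_scope.

Lemma nat_ind2 (P : nat -> Prop) :
  P 0%N -> P 1%N -> (forall k, P k -> P k.+1 -> P k.+2) -> forall k, P k.
Proof.
move=> P0 P1 PSS k; suff: P k /\ P k.+1 by case.
by elim: k => [|k [Pk PSk]]; split=> //; apply: PSS.
Qed.

Section ChebyshevRing.
Context {R : nzRingType}.
Local Notation T := (cheb R).

Lemma cheb1 : T 1 = 'X. Proof. by []. Qed.

Lemma chebSS k : T k.+2 = 'X *+ 2 * T k.+1 - T k.
Proof. by rewrite /cheb /=; case: (cheb_pair R k). Qed.

Lemma coef_chebSS k i :
  (T k.+2)`_i = (if i is i'.+1 then (T k.+1)`_i' *+ 2 else 0) - (T k)`_i.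
Proof.
by rewrite chebSS coefB mulrnAl coefMn coefXM; case: i => [|i] //=; rewrite mul0rn.
Qed.

Lemma size_cheb_leq k : (size (T k) <= k.+1)%N.
Proof.
elim/nat_ind2: k => [||k sk sSk]; first by rewrite size_poly1.
  by rewrite size_polyX.
move/leq_sizeP in sk; move/leq_sizeP in sSk.
apply/leq_sizeP => -[//|j] lt_kj.
by rewrite coef_chebSS sSk ?sk ?mul0rn ?subr0 //; lia.
Qed.

Lemma coef_cheb_gt k j : (k < j)%N -> (T k)`_j = 0.
Proof. exact/leq_sizeP/size_cheb_leq. Qed.

Lemma coef_cheb_diag k : (T k)`_k = 2 ^+ k.-1.
Proof.
elim/nat_ind2: k => [||k _ IH]; first by rewrite coef1.
  by rewrite coefX.
by rewrite coef_chebSS IH coef_cheb_gt // subr0 exprS mulr2n mulrDl !mul1r.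
Qed.

Lemma coef_cheb_odd k j : odd (k + j) -> (T k)`_j = 0.
Proof.
elim/nat_ind2: k j => [||k IH IHS] j; first by rewrite coef1; case: j.
  by rewrite coefX; case: j => [|[]].
rewrite coef_chebSS; case: j => [|j] odd_kj.
  by rewrite IH ?subrr //; move: odd_kj; rewrite !addn0 /= negbK.
by rewrite IHS ?IH ?mul0rn ?subrr //; move: odd_kj; rewrite !addnS /= negbK.
Qed.

Lemma coef_chebS_diag k : (T k.+1)`_k = 0.
Proof. by rewrite coef_cheb_odd // addSn addnn /= odd_double. Qed.

Lemma coef_chebSSS_diag k : (T k.+3)`_k = 0.
Proof. by rewrite coef_cheb_odd // !addSn addnn /= odd_double. Qed.
End ChebyshevRing.

Section ChebyshevComRing.
Context {R : comNzRingType}.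
Local Notation T := (cheb R).

Lemma cheb_mul m k : T (m + k) * T k *+ 2 = T (m + k + k) + T m.
Proof.
elim/nat_ind2: k m => [||k IH IHS] m; first by rewrite !addn0 mulr1 mulr2n.
  by rewrite !addn1 cheb1 chebSS; ring.
have := IHS m.+1; have := IH m.+2.
have -> : (m.+2 + k = m + k.+2)%N by lia.
have -> : (m.+1 + k.+1 = m + k.+2)%N by lia.
rewrite !addnS (chebSS k) (chebSS m) (chebSS ((m + k).+2 + k)) => IHm2 IHm1.
by rewrite mulrBr mulrnBl mulrCA -mulrnAr IHm1 IHm2; ring.
Qed.

Lemma cheb_comp m s : T m \Po T s = T (m * s).
Proof.
elim/nat_ind2: m => [||m IH IHS]; first by rewrite comp_polyC.
  by rewrite comp_polyX mul1n.
rewrite chebSS comp_polyB comp_polyM raddfMn /= comp_polyX IH IHS !mulSnr.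
by apply/eqP; rewrite subr_eq -cheb_mul mulrC mulrnAr.
Qed.
End ChebyshevComRing.

Section ChebyshevNumField.
Context {R : numFieldType}.
Local Notation T := (cheb R).

Lemma coef_chebSS_diag k : (T k.+2)`_k = - (k.+2)%:R / 4 * 2 ^+ k.+1.
Proof.
elim: k => [|k IH]; first by rewrite coef_chebSS coef1 /=; field.
by rewrite coef_chebSS IH coef_cheb_diag -!natr1 -mulr_natr !exprS /=; field.
Qed.

Lemma coef_chebSSSS_diag k :
  (T k.+4)`_k = (k.+4)%:R * (k.+1)%:R / 32 * 2 ^+ k.+3.
Proof.
elim: k => [|k IH]; first by rewrite !coef_chebSS coef1 /=; field.
by rewrite coef_chebSS IH coef_chebSS_diag -!natr1 -mulr_natr !exprS; field.
Qed.

(* Degrees are indexed by K = n - 4, which keeps them free of truncated subtraction. *)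
Definition cheb_head K : {poly R} :=
  'X^(K.+4) - ((K.+4)%:R / 4) *: 'X^(K.+2) + ((K.+4)%:R * (K.+1)%:R / 32) *: 'X^K.

Lemma size_cheb_sub_head K : (size (T K.+4 - 2 ^+ K.+3 *: cheb_head K)%R <= K)%N.
Proof.
apply/leq_sizeP => j /subnK <-; move: (j - K)%N => i {j}.
rewrite /cheb_head !(coefB, coefD, coefZ, coefXn).
rewrite (eqn_add2r K i 4) (eqn_add2r K i 2) (eqn_add2r K i 0).
case: i => [|[|[|[|[|i]]]]] /=.
- by rewrite coef_chebSSSS_diag; field.
- by rewrite coef_chebSSS_diag; ring.
- by rewrite coef_chebSS_diag; field.
- by rewrite coef_chebS_diag; ring.
- by rewrite coef_cheb_diag; ring.
- by rewrite coef_cheb_gt; [ring | lia].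
Qed.

Lemma size_cheb k : size (T k) = k.+1.
Proof.
apply/anti_leq; rewrite size_cheb_leq ltnNge /=; apply/negP => /leq_sizeP/(_ k (leqnn k)).
by rewrite coef_cheb_diag; apply/eqP; rewrite expf_neq0 ?pnatr_eq0.
Qed.

Lemma cheb_split_lead (p : {poly R}) : p != 0 ->
  exists2 c, c != 0 & (size (p - c *: T (size p).-1)%R <= (size p).-1)%N.
Proof.
move=> nz_p; set m := (size p).-1.
have nz2 : (2 : R) ^+ m.-1 != 0 by rewrite expf_neq0 ?pnatr_eq0.
exists (lead_coef p / 2 ^+ m.-1); first by rewrite mulf_neq0 ?invr_eq0 ?lead_coef_eq0.
apply/leq_sizeP => j; rewrite leq_eqVlt => /predU1P[<-|lt_mj].
  by rewrite coefB coefZ coef_cheb_diag divfK // subrr.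
rewrite coefB coefZ coef_cheb_gt // mulr0 subr0.
by apply/leq_sizeP: lt_mj; rewrite /m -ltnS prednK // size_poly_gt0.
Qed.

Lemma comp_cheb_sub_head (F : {poly R}) s (K := ((size F).-1 * s - 4)%N) :
  (1 < size F)%N -> (5 <= s)%N ->
  exists2 A, A != 0 & (size (F \Po T s - A *: cheb_head K)%R <= K)%N.
Proof.
move=> lt1F le5s.
have nz_F : F != 0 by rewrite -size_poly_gt0; lia.
have le4 : (4 <= (size F).-1 * s)%N by rewrite -[4%N]mul1n leq_mul //; lia.
have [c nz_c szG] := cheb_split_lead nz_F; set G := F - _ in szG.
exists (c * 2 ^+ K.+3); first by rewrite mulf_neq0 ?expf_neq0 ?pnatr_eq0.
have -> : F \Po T s - c * 2 ^+ K.+3 *: cheb_head K =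
    c *: (T K.+4 - 2 ^+ K.+3 *: cheb_head K) + (G \Po T s).
  rewrite /G comp_polyB comp_polyZ cheb_comp.
  have -> : ((size F).-1 * s = K.+4)%N by rewrite /K; lia.
  by rewrite scalerBr scalerA [RHS]addrC addrA subrK.
apply: leq_trans (size_polyD _ _) _; rewrite geq_max.
rewrite (leq_trans (size_scale_leq _ _)) ?size_cheb_sub_head //=.
apply: leq_trans (size_comp_poly_leq _ _) _; rewrite size_cheb /=.
have: ((size G).-1 * s <= (size F).-2 * s)%N by rewrite leq_mul2r; lia.
have: ((size F).-2 * s + s = (size F).-1 * s)%N by rewrite -mulSnr prednK //; lia.
rewrite /K; move: ((size G).-1 * s)%N ((size F).-2 * s)%N => a b; lia.
Qed.
End ChebyshevNumField.

Lemma size_lin (R : idomainType) (a b : R) : a != 0 -> size (a *: 'X + b%:P) = 2.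
Proof.
by move=> nz_a; rewrite -mul_polyC size_MXaddC polyC_eq0 (negPf nz_a) size_polyC nz_a.
Qed.

Lemma coef_linpow (R : comNzRingType) (a b : R) k i :
  ((a *: 'X + b%:P) ^+ k)`_i = 'C(k, i)%:R * a ^+ i * b ^+ (k - i).
Proof.
rewrite addrC exprDn.
under eq_bigr => j _ do rewrite -polyC_exp exprZn mul_polyC scalerA scalerMnl.
rewrite coefE (big_ord1_eq _ (fun j => b ^+ (k - j) * a ^+ j *+ 'C(k, j))) ltnS.
by case: leqP => [_ | /bin_small->]; rewrite -mulr_natl ?mul0r //; ring.
Qed.

Lemma natr_bin_top (R : numFieldType) (m k : nat) :
  ('C(m + k, k)%:R : R) = ((m + k) ^_ m)%:R / (m`!)%:R.
Proof.
rewrite -[X in 'C(_, X)](addKn m k) bin_sub ?leq_addr // -bin_ffact natrM mulfK //.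
by rewrite pnatr_eq0 -lt0n fact_gt0.
Qed.

Lemma natr_binSSn (R : numFieldType) k : ('C(k.+2, k)%:R : R) = (k.+2)%:R * (k.+1)%:R / 2.
Proof. by rewrite (natr_bin_top _ 2 k) !ffactnS ffactn0 !succnK muln1 natrM. Qed.

Lemma natr_binSSSn (R : numFieldType) k :
  ('C(k.+3, k)%:R : R) = (k.+3)%:R * (k.+2)%:R * (k.+1)%:R / 6.
Proof. by rewrite (natr_bin_top _ 3 k) !ffactnS ffactn0 !succnK muln1 !natrM !mulrA. Qed.

Lemma natr_binSSSSn (R : numFieldType) k :
  ('C(k.+4, k)%:R : R) = (k.+4)%:R * (k.+3)%:R * (k.+2)%:R * (k.+1)%:R / 24.
Proof. by rewrite (natr_bin_top _ 4 k) !ffactnS ffactn0 !succnK muln1 !natrM !mulrA. Qed.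

Section ChebyshevHeadComposition.
Context {R : numFieldType}.
Variables (a b : R) (K : nat).
Local Notation L := (a *: 'X + b%:P).
Local Notation n := ((K.+4)%:R : R).

Lemma coef_cheb_head_comp j : (cheb_head K \Po L)`_j =
  'C(K.+4, j)%:R * a ^+ j * b ^+ (K.+4 - j)
  - n / 4 * ('C(K.+2, j)%:R * a ^+ j * b ^+ (K.+2 - j))
  + n * (n - 3) / 32 * ('C(K, j)%:R * a ^+ j * b ^+ (K - j)).
Proof.
have -> : n - 3 = (K.+1)%:R by rewrite -!natr1; ring.
rewrite /cheb_head comp_polyD comp_polyB !comp_polyZ !comp_Xn_poly.
by rewrite !(coefD, coefN, coefZ, coef_linpow).
Qed.

Lemma coef_cheb_head_comp4 : (cheb_head K \Po L)`_K.+4 = a ^+ K.+4.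
Proof. by rewrite coef_cheb_head_comp binn subnn !bin_small; [ring | lia..]. Qed.

Lemma coef_cheb_head_comp3 : (cheb_head K \Po L)`_K.+3 = n * a ^+ K.+3 * b.
Proof. by rewrite coef_cheb_head_comp binSn subSnn !bin_small; [ring | lia..]. Qed.

Lemma coef_cheb_head_comp2 :
  (cheb_head K \Po L)`_K.+2 = a ^+ K.+2 * (n * (n - 1) / 2 * b ^+ 2 - n / 4).
Proof.
rewrite coef_cheb_head_comp natr_binSSn binn subnn bin_small // (addnK K.+2 2).
by rewrite -!natr1; field.
Qed.

Lemma coef_cheb_head_comp1 : (cheb_head K \Po L)`_K.+1 =
  a ^+ K.+1 * (n * (n - 1) * (n - 2) / 6 * b ^+ 3 - n * (n - 2) / 4 * b).
Proof.
rewrite coef_cheb_head_comp natr_binSSSn binSn bin_small // (addnK K.+1 3) subSnn -!natr1.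
by field.
Qed.

Lemma coef_cheb_head_comp0 : (cheb_head K \Po L)`_K = a ^+ K *
  (n * (n - 1) * (n - 2) * (n - 3) / 24 * b ^+ 4 - n * (n - 2) * (n - 3) / 8 * b ^+ 2
   + n * (n - 3) / 32).
Proof.
rewrite coef_cheb_head_comp natr_binSSSSn natr_binSSn binn (addnK K 4) (addnK K 2) subnn.
by rewrite -!natr1; field.
Qed.
End ChebyshevHeadComposition.

Section ChebyshevExpansionTop.
Context {R : numFieldType}.
Variables (d : nat -> R) (K : nat).
Local Notation T := (cheb R).
Local Notation p := (\sum_(k < K.+4.+1) d k *: T k).
Local Notation n := ((K.+4)%:R : R).

Lemma coef_cheb_sum_top j : (K <= j)%N -> p`_j =
  d K * (T K)`_j + d K.+1 * (T K.+1)`_j + d K.+2 * (T K.+2)`_j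
  + d K.+3 * (T K.+3)`_j + d K.+4 * (T K.+4)`_j.
Proof.
move=> le_Kj; rewrite coef_sum !big_ord_recr /= big1 ?add0r ?coefZ // => k _.
by rewrite coefZ coef_cheb_gt ?mulr0 //; apply: leq_trans le_Kj.
Qed.

Lemma cheb_expansion_sub2 : p`_K.+2 + n / 4 * p`_K.+4 = d K.+2 * 2 ^+ K.+1.
Proof.
rewrite !coef_cheb_sum_top; [|lia..].
rewrite !coef_cheb_diag !coef_chebS_diag !coef_chebSS_diag.
by rewrite !coef_cheb_gt ?succnK -?natr1 ?exprS; [field | lia..].
Qed.

Lemma cheb_expansion_sub3 : p`_K.+1 + (n - 1) / 4 * p`_K.+3 = d K.+1 * 2 ^+ K.
Proof.
rewrite !coef_cheb_sum_top; [|lia..].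
rewrite !coef_cheb_diag !coef_chebS_diag !coef_chebSS_diag.
by rewrite coef_chebSSS_diag !coef_cheb_gt ?succnK -?natr1 ?exprS; [field | lia..].
Qed.

Lemma cheb_expansion_sub4 : p`_K - n * (n - 3) / 32 * p`_K.+4 =
  d K * 2 ^+ K.-1 - (n - 2) / 4 * 2 ^+ K.+1 * d K.+2.
Proof.
rewrite !coef_cheb_sum_top; [|lia..].
rewrite !coef_cheb_diag !coef_chebS_diag !coef_chebSS_diag coef_chebSSS_diag.
by rewrite coef_chebSSSS_diag !coef_cheb_gt ?succnK -?natr1 ?exprS; [field | lia..].
Qed.
End ChebyshevExpansionTop.

Section TopCoefficientEquations.
Variables (F : fieldType) (a b n : F).
Hypotheses (nz_n1 : n - 1 != 0) (nz_2n1 : 2 * n - 1 != 0).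
Hypothesis nz2 : 2 != 0 :> F.
Hypothesis sub2_eq : 2 * (n - 1) * b ^+ 2 = 1 - a ^+ 2.

Let sqr_a : a ^+ 2 = 1 - 2 * (n - 1) * b ^+ 2.
Proof. by rewrite sub2_eq; ring. Qed.

Let b0_trivial : b = 0 -> (a = 1 \/ a = -1) /\ b = 0.
Proof.
move=> b0; split=> //; have /eqP : a ^+ 2 = 1 by rewrite sqr_a b0; ring.
by rewrite sqrf_eq1 => /orP[] /eqP; [left | right].
Qed.

Lemma sub2_sub3_solution :
  b * (2 * (n - 1) * (n - 2) * b ^+ 2 - 3 * (n - 2) + 3 * (n - 1) * a ^+ 2) = 0 ->
  ((a = 1 \/ a = -1) /\ b = 0) \/
  (4 * b ^+ 2 = 6 / ((n - 1) * (2 * n - 1)) /\ a ^+ 2 = (2 * n - 4) / (2 * n - 1)).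
Proof.
move/eqP; rewrite mulf_eq0 sqr_a => /orP[/eqP/b0_trivial | /eqP sub3_eq]; first by left.
have key : 2 * b ^+ 2 * ((n - 1) * (2 * n - 1)) = 3.
  by apply/eqP; rewrite eq_sym -subr_eq0 -sub3_eq; apply/eqP; ring.
right; split.
  have -> : 6 = 2 * 3 :> F by ring.
  by rewrite -key; field; rewrite nz_2n1 nz_n1.
have -> : 2 * n - 4 = 2 * n - 1 - 3 by ring.
by rewrite -key; field.
Qed.

Lemma sub2_sub4_solution :
  4 * (n - 1) * (n - 2) * b ^+ 4 - 12 * (n - 2) * b ^+ 2 + 3 * (1 - a ^+ 4) = 0 ->
  ((a = 1 \/ a = -1) /\ b = 0) \/
  (4 * b ^+ 2 = 12 / ((n - 1) * (2 * n - 1)) /\ a ^+ 2 = (2 * n - 7) / (2 * n - 1)).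
Proof.
rewrite -[a ^+ 4]/(a ^+ (2 * 2)) exprM sqr_a => sub4_eq.
have /eqP : (2 * b) ^+ 2 * (3 - (n - 1) * (2 * n - 1) * b ^+ 2) = 0.
  by rewrite -sub4_eq; ring.
rewrite mulf_eq0 sqrf_eq0 mulf_eq0 (negPf nz2) /=.
case/orP=> [/eqP/b0_trivial | ]; [by left | rewrite subr_eq0 => /eqP key; right].
have -> : 12 = 4 * 3 :> F by ring.
have -> : 2 * n - 7 = 2 * n - 1 - 2 * 3 :> F by ring.
by rewrite key; split; field; rewrite ?nz_2n1 ?nz_n1.
Qed.
End TopCoefficientEquations.

Section ComposedChebyshev.
Context {R : numFieldType}.
Variables (F : {poly R}) (s : nat) (a b : R).
Hypotheses (lt1F : (1 < size F)%N) (le5s : (5 <= s)%N) (nz_a : a != 0).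
Local Notation L := (a *: 'X + b%:P).
Local Notation Q := ((F \Po cheb R s) \Po L).
Local Notation K := ((size F).-1 * s - 4)%N.

Lemma size_comp_cheb_lin : (size Q).-1 = K.+4.
Proof.
rewrite !size_comp_poly size_lin // size_cheb muln1 /=.
have : (4 <= (size F).-1 * s)%N by rewrite -[4%N]mul1n leq_mul //; lia.
by move: ((size F).-1 * s)%N => m; lia.
Qed.

Lemma coef_comp_cheb_lin_top :
  exists2 A, A != 0 & forall j, (K <= j)%N -> Q`_j = A * (cheb_head K \Po L)`_j.
Proof.
have [A nz_A szE] := comp_cheb_sub_head lt1F le5s.
rewrite -(size_comp_poly2 _ (size_lin b nz_a)) in szE; move/leq_sizeP in szE.
exists A => // j le_Kj; rewrite -[F \Po _](subrK (A *: cheb_head K)).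
by rewrite comp_polyD comp_polyZ coefD coefZ szE ?add0r.
Qed.

Variable d : nat -> R.
Hypothesis Q_expansion : cheb_expansion Q d.
Local Notation n := ((K.+4)%:R : R).

Let Q_sum : Q = \sum_(k < K.+4.+1) d k *: cheb R k.
Proof. by move: Q_expansion; rewrite /cheb_expansion size_comp_cheb_lin. Qed.

Let nz_n_div m : (0 < m)%N -> n / m%:R != 0.
Proof. by move=> m_gt0; rewrite mulf_neq0 ?invr_eq0 ?pnatr_eq0 // -lt0n. Qed.

(* Fed with the top coefficients of Q, each relation cheb_expansion_sub_ becomes a
   nonzero multiple of the equation stated. *)
Lemma cheb_sub2_eq : d K.+2 = 0 -> 2 * (n - 1) * b ^+ 2 = 1 - a ^+ 2.
Proof.
have [A nz_A topQ] := coef_comp_cheb_lin_top.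
move=> d2; have := cheb_expansion_sub2 d K; rewrite -Q_sum !topQ; [|lia..].
rewrite coef_cheb_head_comp2 coef_cheb_head_comp4 d2 mul0r => e2.
have nz_c := mulf_neq0 (mulf_neq0 nz_A (expf_neq0 K.+2 nz_a)) (@nz_n_div 4 isT).
apply/eqP; rewrite -subr_eq0 -(mulIr_eq0 _ (mulIf nz_c)).
by apply/eqP; rewrite -e2 !exprS; field.
Qed.

Lemma cheb_sub3_eq : d K.+1 = 0 ->
  b * (2 * (n - 1) * (n - 2) * b ^+ 2 - 3 * (n - 2) + 3 * (n - 1) * a ^+ 2) = 0.
Proof.
have [A nz_A topQ] := coef_comp_cheb_lin_top.
move=> d1; have := cheb_expansion_sub3 d K; rewrite -Q_sum !topQ; [|lia..].
rewrite coef_cheb_head_comp1 coef_cheb_head_comp3 d1 mul0r => e3.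
have nz_c := mulf_neq0 (mulf_neq0 nz_A (expf_neq0 K.+1 nz_a)) (@nz_n_div 12 isT).
apply/eqP; rewrite -(mulIr_eq0 _ (mulIf nz_c)).
by apply/eqP; rewrite -e3 !exprS; field.
Qed.

Lemma cheb_sub4_eq : d K.+2 = 0 -> d K = 0 ->
  4 * (n - 1) * (n - 2) * b ^+ 4 - 12 * (n - 2) * b ^+ 2 + 3 * (1 - a ^+ 4) = 0.
Proof.
have [A nz_A topQ] := coef_comp_cheb_lin_top.
move=> d2 d0; have := cheb_expansion_sub4 d K; rewrite -Q_sum !topQ; [|lia..].
rewrite coef_cheb_head_comp0 coef_cheb_head_comp4 d0 d2 mul0r mulr0 subr0 => e4.
have nz_n3 : n - 3 != 0 by rewrite (_ : n - 3 = (K.+1)%:R) ?pnatr_eq0 // -!natr1; ring.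
have nz_c := mulf_neq0 (mulf_neq0 nz_A (expf_neq0 K nz_a)) (@nz_n_div 96 isT).
have {}nz_c := mulf_neq0 nz_c nz_n3.
apply/eqP; rewrite -(mulIr_eq0 _ (mulIf nz_c)).
by apply/eqP; rewrite -e4 !exprS; field.
Qed.
End ComposedChebyshev.

Lemma nontrivial_solution_bounds (R : realFieldType) (a b n c e : R) :
  1 < n -> 0 < c -> e < 2 * n - 1 ->
  4 * b ^+ 2 = c / ((n - 1) * (2 * n - 1)) -> a ^+ 2 = e / (2 * n - 1) ->
  a ^+ 2 < 1 /\ b != 0.
Proof.
move=> lt1n gt0c lte sqr_b ->; split; first by rewrite ltr_pdivrMr ?mul1r //; lra.
have : 0 < 4 * b ^+ 2 by rewrite sqr_b divr_gt0 // mulr_gt0 //; lra.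
by apply: contraTneq => ->; rewrite expr0n mulr0 ltxx.
Qed.

Unset Implicit Arguments.

Theorem lemma3p5 (R : rcfType) (F : {poly R}) (s : nat) (alpha beta : R) :
  (1 < size F)%N -> (5 <= s)%N -> alpha != 0 ->
  let Q := (F \Po cheb R s) \Po (alpha *: 'X + beta%:P) in
  let n := (size Q).-1 in
  forall d : nat -> R, cheb_expansion Q d ->
  let trivial_case := (alpha = 1 \/ alpha = -1) /\ beta = 0 in
  ((d (n - 2)%N = 0 -> d (n - 3)%N = 0 ->
     trivial_case \/
     (4 * beta ^+ 2 = 6 / ((n%:R - 1) * (2 * n%:R - 1)) /\
      alpha ^+ 2 = (2 * n%:R - 4) / (2 * n%:R - 1)))
  /\
   (d (n - 2)%N = 0 -> d (n - 4)%N = 0 ->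
     trivial_case \/
     (4 * beta ^+ 2 = 12 / ((n%:R - 1) * (2 * n%:R - 1)) /\
      alpha ^+ 2 = (2 * n%:R - 7) / (2 * n%:R - 1)))
  /\
   ((d (n - 2)%N = 0 /\ (d (n - 3)%N = 0 \/ d (n - 4)%N = 0)) ->
     ~ trivial_case -> alpha ^+ 2 < 1 /\ beta != 0)).
Proof.
move=> lt1F le5s nz_a Q n d Q_exp tc.
rewrite /n size_comp_cheb_lin // !subSS !subn0.
set K := ((size F).-1 * s - 4)%N.
have lt1n : 1 < (K.+4)%:R :> R by rewrite ltr1n.
have nz_n1 : (K.+4)%:R - 1 != 0 :> R by rewrite lt0r_neq0 // subr_gt0.
have nz_2n1 : 2 * (K.+4)%:R - 1 != 0 :> R by rewrite lt0r_neq0 //; lra.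
have nz2 : 2 != 0 :> R by rewrite pnatr_eq0.
have sub2 := cheb_sub2_eq lt1F le5s nz_a Q_exp.
have part1 d2 d1 := sub2_sub3_solution nz_n1 nz_2n1 (sub2 d2)
  (cheb_sub3_eq lt1F le5s nz_a Q_exp d1).
have part2 d2 d0 := sub2_sub4_solution nz_n1 nz_2n1 nz2 (sub2 d2)
  (cheb_sub4_eq lt1F le5s nz_a Q_exp d2 d0).
split; [exact: part1 | split; [exact: part2 |]].
move=> [d2 [/(part1 d2) | /(part2 d2)]] [] // [sqr_b sqr_a] _;
  by apply: (nontrivial_solution_bounds lt1n _ _ sqr_b sqr_a); lra.
Qed.
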